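(* Fix $\Gamma$ and a set $\Lambda$ with $\Lambda\setminus\Gamma\ne\emptyset$, and let $\lambda=\min(\Lambda\setminus\Gamma)-v_0$. Let $\alpha\in N_\Lambda$ with $\Lambda_\alpha=\Lambda$. Then for every integer $k>\lambda$, $$N_\Lambda^k\cap\big(j^k(\alpha)+\widetilde T_k(\alpha)\big)=\{j^k(\alpha)\},$$ where $N^k_\Lambda=\{j^k(\psi):\psi\in N_\Lambda\}$ and $\widetilde T_k(\alpha)=\{j^k\big(x'(t)\epsilon+\alpha^*(g),\ y'(t)\epsilon+\alpha^*(h)\big):\epsilon\in\mathcal M_1^2,\ g\in\langle X^2,Y\rangle,\ h\in\mathcal M_2^2\}$ for $j^k(\alpha)=(x(t),y(t))$ (the tangent space at $j^k(\alpha)$ to its orbit under the group of $k$-jets of $\widetilde{\mathcal A}$).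
   Context: $\mathcal O_1=\mathbb C\{t\}$, $\mathcal O_2=\mathbb C\{X,Y\}$ with maximal ideals $\mathcal M_1,\mathcal M_2$; $\alpha^*(h)=h(x(t),y(t))$; $j^k$ is truncation modulo $t^{k+1}$. $\Gamma$ is the semigroup of values of a plane branch with minimal generators $v_0<v_1<\cdots<v_g$ and conductor $c$; $\Sigma_\Gamma$ is the set of Puiseux parametrizations $(t^{v_0},t^{v_1}+\sum_{v_1<i<c}a_it^i)$ (primitive, $v_0\nmid v_1$) with semigroup of values $\Gamma$. For a primitive parametrization $\varphi$ and $\omega=h\,dX+g\,dY$, $v_\varphi(\omega)=\mathrm{ord}_t(h(\varphi)x'+g(\varphi)y')+1$, and $\Lambda_\varphi$ is the set of these values over forms with nonzero pull-back. $N_\Lambda=\{(t^{v_0},t^{v_1}+t^\lambda+\sum_{j>\lambda}a_jt^j)\in\Sigma_\Gamma:\ a_j=0\text{ whenever }j+v_0\in\Lambda\}$. *)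

From HB Require Import structures.
From mathcomp Require Import all_boot all_order all_algebra.
Set Implicit Arguments. Unset Strict Implicit. Unset Printing Implicit Defensive.
Import Order.TTheory GRing.Theory Num.Theory.
Local Open Scope ring_scope.

Section Defs.
Variable K : numClosedFieldType.

(* order in t of a one-variable (polynomial) series: index of the first
   nonzero coefficient (meaningful for p != 0) *)
Definition ordt (p : {poly K}) : nat := find (fun a : K => a != 0) p.

(* bivariate polynomials in X, Y: outer variable Y, inner variable X;
   the coefficient of X^i Y^j in h is (h`_j)`_i *)
Definition eval2 (h : {poly {poly K}}) (x y : {poly K}) : {poly K} :=
  (map_poly (fun p : {poly K} => p \Po x) h).[y].

Definition varX : {poly {poly K}} := ('X : {poly K})%:P.
Definition varY : {poly {poly K}} := 'X.

Definition jet (k : nat) (p : {poly K}) : {poly K} := take_poly k.+1 p.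
Definition jet2 (k : nat) (a : {poly K} * {poly K}) :=
  (jet k a.1, jet k a.2).

Definition semigroup_values (x y : {poly K}) (n : nat) : Prop :=
  exists h : {poly {poly K}}, eval2 h x y != 0 /\ ordt (eval2 h x y) = n.

(* Lambda_phi : values of differential forms h dX + g dY *)
Definition Lambda_of (a : {poly K} * {poly K}) (n : nat) : Prop :=
  exists h g : {poly {poly K}},
    let w := eval2 h a.1 a.2 * a.1^`() + eval2 g a.1 a.2 * a.2^`() in
    w != 0 /\ n = (ordt w).+1.

Definition in_Sigma (Gamma : nat -> Prop) (v0 v1 c : nat)
  (a : {poly K} * {poly K}) : Prop :=
  [/\ a.1 = 'X^v0,
      (forall i, (a.2 - 'X^v1)`_i != 0 -> (v1 < i < c)%N),
      ~~ (v0 %| v1)%N &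
      (forall n, semigroup_values a.1 a.2 n <-> Gamma n)].

(* N_Lambda, with lam = min(Lambda \ Gamma) - v0 *)
Definition in_N (Gamma Lambda : nat -> Prop) (v0 v1 c lam : nat)
  (a : {poly K} * {poly K}) : Prop :=
  in_Sigma Gamma v0 v1 c a /\
  exists r : {poly K},
    [/\ a.2 = 'X^v1 + 'X^lam + r,
        (forall j, (j <= lam)%N -> r`_j = 0) &
        (forall j, Lambda (j + v0)%N -> r`_j = 0)].

Definition in_Nk (Gamma Lambda : nat -> Prop) (v0 v1 c lam k : nat)
  (J : {poly K} * {poly K}) : Prop :=
  exists psi, in_N Gamma Lambda v0 v1 c lam psi /\ J = jet2 k psi.

Definition in_X2Y (g : {poly {poly K}}) : Prop :=
  exists a b : {poly {poly K}}, g = a * varX ^+ 2 + b * varY.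
Definition in_M2sq (h : {poly {poly K}}) : Prop :=
  forall i j : nat, (i + j < 2)%N -> (h`_j)`_i = 0.

Definition Ttilde (k : nat) (alpha : {poly K} * {poly K})
  (V : {poly K} * {poly K}) : Prop :=
  let x := jet k alpha.1 in let y := jet k alpha.2 in
  exists (eps : {poly K}) (g h : {poly {poly K}}),
    [/\ eps`_0 = 0, eps`_1 = 0, in_X2Y g, in_M2sq h &
        V = (jet k (x^`() * eps + eval2 g x y),
             jet k (y^`() * eps + eval2 h x y))].

End Defs.

Definition first_gen (Gamma : nat -> Prop) (v0 : nat) : Prop :=
  [/\ Gamma v0, (0 < v0)%N & forall n, Gamma n -> (0 < n)%N -> (v0 <= n)%N].
Definition second_gen (Gamma : nat -> Prop) (v0 v1 : nat) : Prop :=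
  [/\ Gamma v1, ~~ (v0 %| v1)%N &
      forall n, Gamma n -> ~~ (v0 %| n)%N -> (v1 <= n)%N].
Definition conductor (Gamma : nat -> Prop) (c : nat) : Prop :=
  (forall n, (c <= n)%N -> Gamma n) /\
  (forall c', (forall n, (c' <= n)%N -> Gamma n) -> (c <= c')%N).
Definition is_min (P : nat -> Prop) (m : nat) : Prop :=
  P m /\ forall n, P n -> (m <= n)%N.

From HB Require Import structures.
From mathcomp Require Import all_boot all_order all_algebra ring zify.
Import GRing.Theory Num.Theory.
Set Implicit Arguments. Unset Strict Implicit.
Local Open Scope ring_scope.

(* Series are handled through their truncations, so everything is phrased with
   the order of vanishing: [vanishes_to n p] says that t^n divides p.

   Let alpha = (t^v0, Y) in N_Lambda and let J = j^k(psi) = j^k(alpha) + V with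
   psi in N_Lambda and V = j^k(x' eps + G(x,y), y' eps + H(x,y)) a tangent
   vector.  The first components force x' eps + G(x,y) = 0 mod t^(k+1).  Then
     x' (y' eps + H) = y' (x' eps + G) + (x' H - y' G),
   so x' D, with D the second component of V, agrees modulo t^(k+v0) with the
   pull-back of the form w = H dX - G dY along alpha (replacing the jet y by Y
   is harmless since G(x,Y) vanishes to order v0).  If D <> 0 has order j <= k,
   the form w has value j + v0, hence j + v0 lies in Lambda_alpha = Lambda.
   But two elements of N_Lambda have the same coefficient of t^j whenever
   j + v0 is in Lambda, and D_j is exactly that difference: contradiction. *)

Section Vanishing.
Variable R : comNzRingType.
Implicit Types p q y z : {poly R}.

Definition vanishes_to (n : nat) p : Prop := forall i, (i < n)%N -> p`_i = 0.

Lemma vanishes_toW m n p : (n <= m)%N -> vanishes_to m p -> vanishes_to n p.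
Proof. by move=> le_nm hp i lt_in; apply: hp; apply: leq_trans lt_in le_nm. Qed.

Lemma vanishes_toD n p q : vanishes_to n p -> vanishes_to n q -> vanishes_to n (p + q).
Proof. by move=> hp hq i lt_in; rewrite coefD hp ?hq ?addr0. Qed.

Lemma vanishes_toN n p : vanishes_to n p -> vanishes_to n (- p).
Proof. by move=> hp i lt_in; rewrite coefN hp ?oppr0. Qed.

Lemma vanishes_toM m n p q :
  vanishes_to m p -> vanishes_to n q -> vanishes_to (m + n) (p * q).
Proof.
move=> hp hq i lt_i; rewrite coefM big1 // => [[l hl]] _ /=.
have [lt_lm | le_ml] := ltnP l m; first by rewrite hp ?mul0r.
rewrite hq ?mulr0 // ltn_subLR; last by rewrite -ltnS.
by apply: leq_trans lt_i _; rewrite leq_add2r.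
Qed.

Lemma vanishes_to_deriv n p : vanishes_to n p -> vanishes_to n.-1 p^`().
Proof. by move=> hp i lt_i; rewrite coef_deriv hp ?mul0rn //; case: n hp lt_i. Qed.

Lemma vanishes_to_Xn n m : (n <= m)%N -> vanishes_to n ('X^m : {poly R}).
Proof. by move=> le_nm i lt_in; rewrite coefXn (ltn_eqF (leq_trans lt_in le_nm)). Qed.

Lemma vanishes_to_horner n (P : {poly {poly R}}) y z :
  vanishes_to n (y - z) -> vanishes_to n (P.[y] - P.[z]).
Proof.
move=> hyz; elim/poly_ind: P => [|P c IH].
  by rewrite !horner0 subr0 => i _; rewrite coef0.
have -> : (P * 'X + c%:P).[y] - (P * 'X + c%:P).[z]
          = (P.[y] - P.[z]) * y + P.[z] * (y - z) by rewrite !hornerMXaddC; ring.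
apply: vanishes_toD; first by rewrite -[n]addn0; apply: vanishes_toM.
by rewrite -[n]add0n; apply: vanishes_toM.
Qed.

End Vanishing.

Section Order.
Variable K : numClosedFieldType.
Implicit Types p q : {poly K}.

Lemma jet_coef k p i : (jet k p)`_i = if (i < k.+1)%N then p`_i else 0.
Proof. by rewrite /jet coef_take_poly. Qed.

Lemma vanishes_to_jet k p : vanishes_to k.+1 (p - jet k p).
Proof. by move=> i lt_ik; rewrite coefB jet_coef lt_ik subrr. Qed.

Lemma vanishes_to_jetr n k p : vanishes_to n p -> vanishes_to n (jet k p).
Proof. by move=> hp i lt_in; rewrite jet_coef hp ?if_same. Qed.

Lemma ordtP p : p != 0 -> p`_(ordt p) != 0 /\ vanishes_to (ordt p) p.
Proof.
move=> p_neq0; have has_p : has (fun a : K => a != 0) p.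
  apply/hasP; exists (lead_coef p); last by rewrite lead_coef_eq0.
  by apply: mem_nth; rewrite prednK // size_poly_gt0.
split; first exact: (nth_find 0 has_p).
by move=> i lt_i; have /negbFE/eqP := before_find 0 lt_i.
Qed.

Lemma ordt_eq p n : p`_n != 0 -> vanishes_to n p -> ordt p = n.
Proof.
move=> pn van_n; have p_neq0 : p != 0 by apply: contraNneq pn => ->; rewrite coef0.
have [p_ord van_ord] := ordtP p_neq0.
case: (ltngtP (ordt p) n) => // [lt_n | gt_n].
  by move: p_ord; rewrite van_n ?eqxx.
by move: pn; rewrite van_ord ?eqxx.
Qed.

Lemma ordt_jet k p : jet k p != 0 -> (ordt (jet k p) <= k)%N.
Proof.
move=> /ordtP[nz _]; rewrite leqNgt; apply/negP => lt_k.
by move: nz; rewrite jet_coef ltnS leqNgt lt_k eqxx.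
Qed.

Lemma ordt_congr n p q :
  vanishes_to n (p - q) -> q != 0 -> (ordt q < n)%N -> p != 0 /\ ordt p = ordt q.
Proof.
move=> van q_neq0 lt_n; have [q_ord q_van] := ordtP q_neq0.
have eq_coef i : (i < n)%N -> p`_i = q`_i.
  by move=> lt_i; apply/eqP; rewrite -subr_eq0 -coefB van.
have p_ord : p`_(ordt q) != 0 by rewrite eq_coef.
split; first by apply: contraNneq p_ord => ->; rewrite coef0.
apply: ordt_eq => // i lt_i; rewrite eq_coef ?q_van //; exact: ltn_trans lt_i lt_n.
Qed.

Lemma ordt_derivXn_mul v q : (0 < v)%N -> q != 0 ->
  ('X^v)^`() * q != 0 /\ ordt (('X^v)^`() * q) = (ordt q + v.-1)%N.
Proof.
move=> v_gt0 q_neq0; have [q_ord q_van] := ordtP q_neq0.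
have coef_i i : (('X^v)^`() * q)`_i = (if (i < v.-1)%N then 0 else q`_(i - v.-1)) *+ v.
  by rewrite derivXn mulrnAl mulrC coefMn coefMXn.
have nz : (('X^v)^`() * q)`_(ordt q + v.-1) != 0.
  by rewrite coef_i ltnNge leq_addl addnK mulrn_eq0 negb_or q_ord andbT -lt0n.
split; first by apply: contraNneq nz => ->; rewrite coef0.
apply: ordt_eq => // i lt_i; rewrite coef_i.
case: ifP => [|/negbT]; first by rewrite mul0rn.
by rewrite -leqNgt => le_i; rewrite q_van ?mul0rn // ltn_subLR // addnC.
Qed.

End Order.

Section Eval2.
Variable K : numClosedFieldType.
Implicit Types x y : {poly K}.

Lemma eval2E (h : {poly {poly K}}) x y :
  eval2 h x y = horner_eval y (map_poly (comp_poly x) h).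
Proof. by []. Qed.

Lemma eval2N (g : {poly {poly K}}) x y : eval2 (- g) x y = - eval2 g x y.
Proof. by rewrite !eval2E !rmorphN. Qed.

Lemma vanishes_to_eval2_X2Y n g x y :
  in_X2Y g -> vanishes_to n x -> vanishes_to n y -> vanishes_to n (eval2 g x y).
Proof.
move=> [a [b ->]] van_x van_y.
have -> : eval2 (a * varX K ^+ 2 + b * varY K) x y
          = eval2 a x y * x ^+ 2 + eval2 b x y * y.
  rewrite /varX /varY !eval2E expr2 !(rmorphD, rmorphM) /= map_polyC map_polyX.
  rewrite !horner_evalE hornerC hornerX expr2.
  by congr (_ * (_ * _) + _); exact: comp_polyX.
apply: vanishes_toD; rewrite -[n]add0n; apply: vanishes_toM => //.
rewrite expr2; apply: (@vanishes_toW _ (n + n)); first exact: leq_addl.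
exact: vanishes_toM.
Qed.

Lemma vanishes_to_eval2 n h x y z :
  vanishes_to n (y - z) -> vanishes_to n (eval2 h x y - eval2 h x z).
Proof. exact: vanishes_to_horner. Qed.

End Eval2.

Section Tangent.
Variables (K : numClosedFieldType) (v k : nat) (x Y eps : {poly K}).
Variables (g h : {poly {poly K}}).
Hypotheses (van_x : vanishes_to v x) (van_Y : vanishes_to v Y) (g_X2Y : in_X2Y g).
Let y := jet k Y.
Hypothesis first_comp : jet k (x^`() * eps + eval2 g x y) = 0.

Let D := jet k (y^`() * eps + eval2 h x y).

Let w := eval2 h x Y * x^`() + eval2 (- g) x Y * Y^`().

Lemma tangent_congruence : vanishes_to (k + v) (w - x^`() * D).
Proof.
pose e1 := x^`() * eps + eval2 g x y.
pose Hy := eval2 h x y; pose HY := eval2 h x Y.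
pose Gy := eval2 g x y; pose GY := eval2 g x Y.
(* every summand is a product whose factor orders add up to at least k + v *)
have -> : w - x^`() * D = - (x^`() * (D - (y^`() * eps + Hy)) + y^`() * e1
            + x^`() * (Hy - HY) - y^`() * (Gy - GY) - (y^`() - Y^`()) * GY).
  by rewrite /w /e1 /Hy /HY /Gy /GY eval2N; ring.
have le_kv : (k + v <= v.-1 + k.+1)%N by rewrite addnS -addSn addnC leq_add2r leqSpred.
have van_dx := vanishes_to_deriv van_x.
have van_dy : vanishes_to v.-1 y^`() by apply/vanishes_to_deriv/vanishes_to_jetr.
have van_yY : vanishes_to k.+1 (y - Y).
  by rewrite -opprB; apply/vanishes_toN/vanishes_to_jet.
have van_e1 : vanishes_to k.+1 e1.
  by have := vanishes_to_jet (k := k) e1; rewrite [jet k e1]first_comp subr0.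
have van_D : vanishes_to k.+1 (D - (y^`() * eps + Hy)).
  by rewrite -opprB; apply/vanishes_toN/vanishes_to_jet.
have van_GY : vanishes_to v GY by apply: vanishes_to_eval2_X2Y.
have van_dyY : vanishes_to k (y^`() - Y^`()).
  by rewrite -derivB; exact: (vanishes_to_deriv van_yY).
have prod_Kv a b :
    vanishes_to v.-1 a -> vanishes_to k.+1 b -> vanishes_to (k + v) (a * b).
  by move=> ha hb; apply: vanishes_toW le_kv (vanishes_toM ha hb).
apply/vanishes_toN; rewrite -!addrA; apply: vanishes_toD; first exact: prod_Kv.
apply: vanishes_toD; first exact: prod_Kv.
apply: vanishes_toD; first exact/prod_Kv/vanishes_to_eval2.
apply: vanishes_toD; first exact/vanishes_toN/prod_Kv/vanishes_to_eval2.
exact/vanishes_toN/vanishes_toM.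
Qed.

Lemma tangent_value : x = 'X^v -> (0 < v)%N -> D != 0 ->
  Lambda_of (x, Y) (ordt D + v).
Proof.
move=> def_x v_gt0 D_neq0.
have [xD_neq0 ord_xD] := ordt_derivXn_mul v_gt0 D_neq0; rewrite -def_x in xD_neq0 ord_xD.
have lt_ord : (ordt (x^`() * D) < k + v)%N.
  by rewrite ord_xD -addnS prednK // leq_add2r ordt_jet.
have [w_neq0 ord_w] := ordt_congr tangent_congruence xD_neq0 lt_ord.
by exists h, (- g); split => //=; rewrite -/w ord_w ord_xD -addnS prednK.
Qed.

End Tangent.

Section NLambda.
Variables (K : numClosedFieldType) (Gamma Lambda : nat -> Prop) (v0 v1 c lam : nat).
Implicit Types a b : {poly K} * {poly K}.

(* v0 is the smallest positive value, and v1 is positive since v0 does not divide it *)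
Lemma second_gen_ge_first : first_gen Gamma v0 -> second_gen Gamma v0 v1 -> (v0 <= v1)%N.
Proof.
move=> [_ _ v0_min] [Gv1 v0_ndvd _]; apply: v0_min => //.
by rewrite lt0n; apply: contraNneq v0_ndvd => ->; rewrite dvdn0.
Qed.

Lemma in_N_lt_lam a : in_N Gamma Lambda v0 v1 c lam a -> (v1 < lam)%N.
Proof.
case=> [[_ exps _ _] [r [def_y r_low _]]]; have := exps lam.
rewrite def_y -['X^v1 + _ + r]addrA addrAC subrr add0r coefD coefXn eqxx r_low // addr0.
by move/(_ (oner_neq0 _)) => /andP[].
Qed.

Lemma in_N_vanishes a : in_N Gamma Lambda v0 v1 c lam a -> vanishes_to v1 a.2.
Proof.
move=> aN; have lt_v1 := in_N_lt_lam aN; case: aN => [_ [r [-> r_low _]]].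
apply: vanishes_toD.
  by apply: vanishes_toD; apply: vanishes_to_Xn => //; exact: ltnW.
by move=> i lt_i; apply: r_low; lia.
Qed.

Lemma in_N_coef a b j : in_N Gamma Lambda v0 v1 c lam a ->
  in_N Gamma Lambda v0 v1 c lam b -> Lambda (j + v0)%N -> a.2`_j = b.2`_j.
Proof.
move=> [_ [ra [-> _ ra_Lam]]] [_ [rb [-> _ rb_Lam]]] Lj.
by rewrite !coefD ra_Lam ?rb_Lam.
Qed.

End NLambda.

Lemma jet_Xn (K : numClosedFieldType) k n : (n <= k)%N -> jet k ('X^n : {poly K}) = 'X^n.
Proof. by move=> le_nk; rewrite /jet take_poly_id // size_polyXn. Qed.

Lemma Ttilde0 (K : numClosedFieldType) k (alpha : {poly K} * {poly K}) :
  Ttilde k alpha (0, 0).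
Proof.
have eval2_0 (x y : {poly K}) : eval2 0 x y = 0 by rewrite /eval2 map_poly0 horner0.
exists 0, 0, 0; split; rewrite ?coef0 //.
- by exists 0, 0; rewrite !mul0r addr0.
- by move=> i j _; rewrite !coef0.
- by rewrite !eval2_0 !mulr0 !addr0 /jet take_poly0r.
Qed.

Theorem lemma5p2 (K : numClosedFieldType) (Gamma Lambda : nat -> Prop)
  (v0 v1 c : nat)
  (hv0 : first_gen Gamma v0) (hv1 : second_gen Gamma v0 v1)
  (hc : conductor Gamma c)
  (hne : exists n, Lambda n /\ ~ Gamma n)
  (m lam : nat) (hm : is_min (fun n => Lambda n /\ ~ Gamma n) m)
  (hlam : lam = (m - v0)%N)
  (alpha : {poly K} * {poly K})
  (halpha : in_N Gamma Lambda v0 v1 c lam alpha)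
  (hLa : forall n, Lambda_of alpha n <-> Lambda n)
  (k : nat) (hk : (lam < k)%N) :
  forall J : {poly K} * {poly K},
    (in_Nk Gamma Lambda v0 v1 c lam k J /\
     exists V, Ttilde k alpha V /\
               J = ((jet2 k alpha).1 + V.1, (jet2 k alpha).2 + V.2))
    <-> J = jet2 k alpha.
Proof.
have [_ v0_gt0 _] := hv0.
have le_v0k : (v0 <= k)%N.
  have := second_gen_ge_first hv0 hv1; have := in_N_lt_lam halpha; lia.
have x_alpha : alpha.1 = 'X^v0 by case: halpha => [[]].
move=> J; split=> [|->]; last first.
  split; first by exists alpha.
  by exists (0, 0); split; [exact: Ttilde0 | rewrite /= !addr0].
case=> [[psi [psi_N ->]] [V [[eps [g [h [_ _ g_X2Y _ ->]]]] /= [J1 J2]]]].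
have x_psi : psi.1 = 'X^v0 by case: psi_N => [[]].
rewrite x_alpha x_psi jet_Xn // in J1 J2.
have first_comp : jet k (('X^v0)^`() * eps + eval2 g 'X^v0 (jet k alpha.2)) = 0.
  by apply: (addrI 'X^v0); rewrite -J1 addr0.
rewrite /jet2 x_alpha x_psi jet_Xn //; congr pair; rewrite J2.
set D := jet k (_ * eps + _); suff -> : D = 0 by rewrite addr0.
apply/eqP; apply: contraT => D_neq0.
have van_Y := vanishes_toW (second_gen_ge_first hv0 hv1) (in_N_vanishes halpha).
have van_x : vanishes_to v0 ('X^v0 : {poly K}) by exact: vanishes_to_Xn.
have /hLa Lam : Lambda_of alpha (ordt D + v0).
  have -> : alpha = ('X^v0, alpha.2) by rewrite -x_alpha -surjective_pairing.
  exact: tangent_value van_x van_Y g_X2Y first_comp erefl v0_gt0 D_neq0.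
have le_jk : (ordt D <= k)%N by exact: ordt_jet.
have D_diff : D = jet k psi.2 - jet k alpha.2 by rewrite J2 addrC addKr.
have [D_ord _] := ordtP D_neq0; move: D_ord.
by rewrite {1}D_diff coefB !jet_coef ltnS le_jk (in_N_coef psi_N halpha Lam) subrr eqxx.
Qed.
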